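(* Let $d\le n'\le n$ be integers. There exist hypergraphs $H=(V,E)$ with $|V|=n$, all edges of size $d$, and $|E|=\binom{n'}{d}$, such that every non-adaptive generalized group testing solution for $H$ has size $\Omega\!\left(\min\{n',\, d\log|E|/\log d\}\right)=\Omega\!\left(\min\{n',\, d^2\log n'/\log d\}\right)$.
   Context: A set $T\subseteq V$ (a ''test'') separates two sets $A,B\subseteq V$ if exactly one of $A\cap T$, $B\cap T$ is empty. A non-adaptive generalized group testing solution for a hypergraph $H=(V,E)$ is a family $\mathcal{T}$ of subsets of $V$ such that for every two distinct $A,B\in E$ some $T\in\mathcal{T}$ separates $A$ and $B$. The $\Omega(\cdot)$ hides an absolute constant. *)

From mathcomp Require Import all_boot.
From Stdlib Require Import Reals.
Set Implicit Arguments. Unset Strict Implicit. Unset Printing Implicit Defensive.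

Definition separates (V : finType) (T A B : {set V}) : bool :=
  (A :&: T == set0) != (B :&: T == set0).

Definition ngt_solution (V : finType) (E Tests : {set {set V}}) : Prop :=
  forall A B, A \in E -> B \in E -> A != B ->
    exists2 T, T \in Tests & separates T A B.

(* Let E be the d-subsets of an n'-set P and t the number of tests. A solution
   makes A |-> (tests meeting A) injective on E, so |E| <= 2^t, which settles
   d <= 4. For larger d put r = (d-1)/2. At most one point of P has its tests
   covered by those of r other points of P: two such points, together with
   fewer than d other points, could be exchanged inside a d-set without
   changing the tests it meets. The remaining points form an r-cover-free
   family, which Füredi's argument bounds by r + sum_(i <= k) C(t, i) with
   k ~ 2t / r^2: once the members meeting many still-uncovered tests are peeled
   off, every other member owns a k-set of its tests contained in no other
   member. Estimating the binomial sum gives n' = O(t) when k = 1 and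
   ln n' = O(k ln d) = O(t ln d / d^2) otherwise, and ln C(n', d) <= d ln n'. *)

From mathcomp Require Import all_boot zify.
From Stdlib Require Import Reals Lra.
(* Reals rebinds [_ ^ _] in nat_scope to [Nat.pow]; this restores [expn]. *)
Import ssrnat.
Set Implicit Arguments. Unset Strict Implicit. Unset Printing Implicit Defensive.

Lemma extend_to_card (T : finType) (S A : {set T}) m :
  S \subset A -> #|S| <= m <= #|A| ->
  exists Q : {set T}, [/\ S \subset Q, Q \subset A & #|Q| = m].
Proof.
move=> SA; elim: m => [|m IH] /andP[Sm mA].
  have -> : S = set0 by apply: cards0_eq; lia.
  by exists set0; split; rewrite ?sub0set ?cards0.
have [Sm1|Sm1] := ltnP m #|S|.
  by exists S; split => //; apply/eqP; rewrite eqn_leq Sm Sm1.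
have [Q [SQ QA Qm]] := IH (introT andP (conj Sm1 (ltnW mA))).
have /card_gt0P[z] : 0 < #|A :\: Q| by rewrite cardsDS //; lia.
rewrite in_setD => /andP[zQ zA].
exists (z |: Q); split; first exact: subset_trans SQ (subsetUr _ _).
  by rewrite subUset sub1set zA QA.
by rewrite cardsU1 zQ Qm.
Qed.

Lemma card_le_except_one (T : finType) (L : {set T}) (p : pred T) :
  {in L &, forall x y, p x -> p y -> x = y} ->
  #|L| <= #|[set x in L | ~~ p x]| + 1.
Proof.
move=> p_uniq; have [b /andP[bL pb]|nop] := pickP (fun x => (x \in L) && p x).
  suff /subset_leq_card : L \subset b |: [set x in L | ~~ p x].
    by rewrite cardsU1; case: (_ \in _); lia.
  apply/subsetP => x xL; rewrite !inE xL /=.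
  by case: (boolP (p x)) => [px|]; rewrite ?orbT // (p_uniq x b) ?eqxx.
suff /subset_leq_card : L \subset [set x in L | ~~ p x] by lia.
by apply/subsetP => x xL; rewrite inE xL; move: (nop x); rewrite xL /= => ->.
Qed.

(* With C x the set of tests containing x, outcome C A is the set of tests
   that are positive when A is the set of defectives. *)
Definition outcome (V W : finType) (C : V -> {set W}) (S : {set V}) : {set W} :=
  \bigcup_(s in S) C s.

Section Outcome.
Variables (V W : finType) (C : V -> {set W}).
Implicit Types A B : {set V}.

Lemma outcome0 : outcome C set0 = set0.
Proof. exact: big_set0. Qed.

Lemma outcomeU A B : outcome C (A :|: B) = outcome C A :|: outcome C B.
Proof. exact: bigcup_setU. Qed.

Lemma outcomeU1 x A : outcome C (x |: A) = C x :|: outcome C A.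
Proof. by rewrite outcomeU /outcome big_set1. Qed.

Lemma sub_outcome x A : x \in A -> C x \subset outcome C A.
Proof. exact: bigcup_sup. Qed.

Lemma outcomeS A B : A \subset B -> outcome C A \subset outcome C B.
Proof. by move=> AB; apply/bigcupsP => x /(subsetP AB) /sub_outcome. Qed.

Lemma outcome_cover_greedy (D : {set V}) (Y : {set W}) k m :
  #|Y| <= m * k ->
  (forall Z : {set W}, Z \subset Y -> #|Z| <= k -> exists2 y, y \in D & Z \subset C y) ->
  exists S : {set V}, [/\ S \subset D, #|S| <= m & Y \subset outcome C S].
Proof.
elim: m Y => [|m IH] Y Ymk coverY.
  have -> : Y = set0 by apply: cards0_eq; lia.
  by exists set0; rewrite sub0set cards0 sub0set.
have [Yk|kY] := leqP #|Y| k.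
  have [y yD Yy] := coverY Y (subxx _) Yk.
  exists [set y]; rewrite sub1set yD cards1; split => //.
  exact: subset_trans Yy (sub_outcome (set11 y)).
have [Z [_ ZY Zk]] : exists Z : {set W}, [/\ set0 \subset Z, Z \subset Y & #|Z| = k].
  by apply: extend_to_card; rewrite ?sub0set ?cards0 //; lia.
have [y yD Zy] := coverY Z ZY (eq_leq Zk).
have [S [SD Sm YS]] : exists S : {set V}, [/\ S \subset D, #|S| <= m & Y :\: C y \subset outcome C S].
  apply: IH => [|Z' /subset_trans Z'Y Z'k]; last exact: coverY (Z'Y _ (subsetDl _ _)) Z'k.
  have /subset_leq_card : Z \subset Y :&: C y by rewrite subsetI ZY Zy.
  by rewrite cardsD Zk; lia.
exists (y |: S); rewrite subUset sub1set yD SD outcomeU1; split => //.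
  by rewrite cardsU1; case: (_ \notin _); lia.
by rewrite -subDset.
Qed.

End Outcome.

Definition subsets_upto (W : finType) (Tests : {set W}) k :=
  [set Z : {set W} | Z \subset Tests & #|Z| <= k].

Section CoverFree.
Variables (V W : finType) (C : V -> {set W}) (Tests : {set W}) (G : {set V}) (r : nat).
Hypothesis C_sub_tests : forall x, C x \subset Tests.
Hypothesis cover_free : forall x (S : {set V}),
  x \in G -> S \subset G -> x \notin S -> #|S| <= r -> ~~ (C x \subset outcome C S).

Lemma cover_free_card_tests : r < #|G| -> r < #|Tests|.
Proof.
move=> rG.
have [L [_ LG Lr]] : exists L : {set V}, [/\ set0 \subset L, L \subset G & #|L| = r.+1].
  by apply: extend_to_card; rewrite ?sub0set ?cards0.
pose priv x := C x :\: outcome C (L :\ x).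
have privP x : x \in L -> priv x != set0.
  move=> xL; rewrite setD_eq0 cover_free ?(subsetP LG) ?setD11 //.
    exact: subset_trans (subsetDl _ _) LG.
  by have := cardsD1 x L; rewrite xL Lr; lia.
have [x0 _] : exists x0, x0 \in L by apply/set0Pn; rewrite -card_gt0 Lr.
pose owner T := odflt x0 [pick x in L | T \in priv x].
suff /subset_leq_card : L \subset owner @: Tests.
  by rewrite Lr => /leq_trans; apply; apply: leq_imset_card.
apply/subsetP => x xL; have /set0Pn[T Tx] := privP x xL.
apply/imsetP; exists T; first by move: Tx; rewrite inE => /andP[_ /(subsetP (C_sub_tests x))].
rewrite /owner; case: pickP => [y /andP[yL Ty] /= | /(_ x)]; last by rewrite xL Tx.
have [//|yx] := eqVneq y x; move: Ty; rewrite inE => /andP[/negP[]].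
by apply: subsetP (sub_outcome C _) _ (setDP Tx).1; rewrite !inE xL andbT eq_sym.
Qed.

Variable k : nat.

Definition owns (R : {set V}) x (Z : {set W}) :=
  [&& Z \in subsets_upto Tests k, Z \subset C x &
      [forall y in G :\: R, (y != x) ==> ~~ (Z \subset C y)]].

Lemma exists_owned j (R : {set V}) x : R \subset G -> #|R| + j = r -> x \in G :\: R ->
  #|C x :&: (Tests :\: outcome C R)| <= j * k -> [exists Z, owns R x Z].
Proof.
move=> RG Rj /setDP[xG xR] small; apply: contraT; rewrite negb_exists => /forallP not_owned.
have [S [SD Sj YS]] : exists S : {set V},
    [/\ S \subset (G :\: R) :\ x, #|S| <= j & C x :&: (Tests :\: outcome C R) \subset outcome C S].
  apply: outcome_cover_greedy small _ => Z /subset_trans ZY Zk.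
  have ZCx : Z \subset C x by apply: ZY; apply: subsetIl.
  have ZT : Z \in subsets_upto Tests k by rewrite inE Zk (subset_trans ZCx).
  move: (not_owned Z); rewrite /owns ZT ZCx => /forallPn[y].
  rewrite !negb_imply => /and4P[yGR yx ZCy _].
  by exists y; rewrite // in_setD1 yx.
have xS : x \notin S by apply/negP => /(subsetP SD); rewrite !inE eqxx.
move: (cover_free (S := R :|: S) xG); rewrite in_setU (negPf xR) (negPf xS).
rewrite subUset RG (subset_trans SD (subset_trans (subsetDl _ _) (subsetDl _ _))).
have -> : #|R :|: S| <= r by have := cardsU R S; lia.
move=> /(_ isT isT isT) /negP[]; rewrite outcomeU -subDset.
apply: subset_trans YS; rewrite subsetI subsetDl.
exact: setSD.
Qed.

Lemma card_cover_free_owning j (R : {set V}) : R \subset G -> #|R| + j = r ->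
  (forall x, x \in G :\: R -> #|C x :&: (Tests :\: outcome C R)| <= j * k) ->
  #|G| <= r + #|subsets_upto Tests k|.
Proof.
move=> RG Rj small.
pose owned x := odflt set0 [pick Z | owns R x Z].
have ownedP x : x \in G :\: R -> owns R x (owned x).
  move=> xGR; have /existsP[Z xZ] := exists_owned RG Rj xGR (small x xGR).
  by rewrite /owned; case: pickP => [//|/(_ Z)]; rewrite xZ.
have owned_inj : {in G :\: R &, injective owned}.
  move=> x y xGR yGR eq_xy; apply: contraTeq isT => xy.
  move: (ownedP x xGR) (ownedP y yGR); rewrite /owns eq_xy.
  case/and3P=> _ _ /forallP/(_ y); rewrite yGR eq_sym xy /= => /negPf->.
  by rewrite andbF.
have : owned @: (G :\: R) \subset subsets_upto Tests k.
  by apply/subsetP => Z /imsetP[x xGR ->]; case/and3P: (ownedP x xGR).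
move/subset_leq_card; rewrite card_in_imset // cardsDS //.
by have := subset_leq_card RG; lia.
Qed.

(* Moving into R a member that meets more than (j+1)k uncovered tests lowers
   twice the number of uncovered tests by at least 2(j+1)k + 2, which is
   exactly the drop of the bound from j+1 to j. *)
Lemma card_cover_free_peel j (R : {set V}) : R \subset G -> #|R| + j = r ->
  2 * #|Tests :\: outcome C R| <= k * j * j.+1 + 2 * j ->
  #|G| <= r + #|subsets_upto Tests k|.
Proof.
elim: j R => [|j IH] R RG Rj rest.
  apply: (card_cover_free_owning RG Rj) => x _.
  by have := subset_leq_card (subsetIr (C x) (Tests :\: outcome C R)); lia.
have [x /andP[/setDP[xG xR] big_x] | all_small] :=
  pickP (fun x => (x \in G :\: R) && (j.+1 * k < #|C x :&: (Tests :\: outcome C R)|)).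
  apply: (IH (x |: R)); first by rewrite subUset sub1set xG RG.
    by rewrite cardsU1 xR /=; lia.
  rewrite outcomeU1 setUC -setDDl cardsD setIC.
  by move: big_x rest; set a := #|_ :&: _|; set b := #|_ :\: _|; nia.
apply: (card_cover_free_owning RG Rj) => x xGR.
by move: (all_small x); rewrite xGR /= => /negbT; rewrite -leqNgt.
Qed.

Lemma card_cover_free_le : 2 * #|Tests| <= k * r * r.+1 + 2 * r ->
  #|G| <= r + #|subsets_upto Tests k|.
Proof.
by move=> tests_small; apply: (card_cover_free_peel (sub0set G)); rewrite ?cards0 ?outcome0 ?setD0.
Qed.

End CoverFree.

Lemma card_subsets_upto (W : finType) (Tests : {set W}) k :
  #|subsets_upto Tests k| <= \sum_(i < k.+1) 'C(#|Tests|, i).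
Proof.
elim: k => [|k IH].
  rewrite big_ord_recr big_ord0 /= -cards_draws.
  by apply/subset_leq_card/subsetP => Z; rewrite !inE leqn0.
rewrite big_ord_recr /= -cards_draws.
apply: leq_trans (leq_add IH (leqnn _)) => {IH}.
apply: leq_trans (leq_card_setU _ _).1.
apply/subset_leq_card/subsetP => Z; rewrite !inE => /andP[-> /=].
by rewrite leq_eqVlt ltnS orbC.
Qed.

Lemma sum_binomial1 t : \sum_(i < 2) 'C(t, i) = t.+1.
Proof. by rewrite !big_ord_recl big_ord0 bin0 bin1 addn0 add1n. Qed.

Lemma sum_binomial_ge t k : 0 < k -> t.+1 <= \sum_(i < k.+1) 'C(t, i).
Proof. by case: k => // k _; rewrite !big_ord_recl bin0 bin1 add1n ltnS leq_addr. Qed.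

Lemma bin_le_expn n m : 'C(n, m) <= n ^ m.
Proof.
have ffact_le : n ^_ m <= n ^ m.
  by elim: m => // m IH; rewrite ffactnSr expnS mulnC leq_mul // leq_subr.
by apply: leq_trans ffact_le; rewrite -bin_ffact leq_pmulr ?fact_gt0.
Qed.

Lemma sum_binomial_mul_le t k : k <= t ->
  (\sum_(i < k.+1) 'C(t, i)) * (k ^ k * t ^ (t - k)) <= (t + k) ^ t.
Proof.
move=> kt; rewrite expnDn big_distrl /=.
rewrite (_ : t.+1 = k.+1 + (t - k)); last by lia.
rewrite big_split_ord /=; apply: leq_trans (leq_addr _ _).
apply: leq_sum => i _; rewrite leq_mul2l; apply/orP; right.
have ik : i <= k by rewrite -ltnS.
have -> : k ^ k = k ^ (k - i) * k ^ i by rewrite -expnD subnK.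
have -> : t ^ (t - i) = t ^ (k - i) * t ^ (t - k) by rewrite -expnD; congr (_ ^ _); lia.
rewrite [X in _ <= X]mulnAC leq_mul // leq_mul //.
by elim: (k - i) => // e IH; rewrite !expnS leq_mul.
Qed.

Lemma furedi_parameters d r t k : 1 < r -> r.*2 < d <= r.*2.+2 -> 1 < k ->
  (k - 1) * (r * r.+1) <= 2 * t < k * (r * r.+1) ->
  [/\ 0 < k <= t, t <= k * d ^ 2 & d ^ 2 * k <= 24 * t].
Proof.
move=> r1 /andP[rd dr] k1 /andP[kQ_le kQ_gt]; rewrite -mulnn.
have Qd : r * r.+1 <= d * d by apply: leq_mul; lia.
have dQ : d * d <= 6 * (r * r.+1).
  have : d * d <= (2 * r.+1) * (2 * r.+1) by apply: leq_mul; lia.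
  have : 2 * r.+1 * (2 * r.+1) <= 3 * r * (2 * r.+1) by apply: leq_mul; lia.
  lia.
have Q6 : 6 <= r * r.+1 by apply: (@leq_mul 2 3); lia.
have k_le : 6 * (k - 1) <= (k - 1) * (r * r.+1) by rewrite mulnC leq_mul2l Q6 orbT.
split; first by lia.
  have : k * (r * r.+1) <= k * (d * d) by rewrite leq_mul2l Qd orbT.
  by lia.
have : d * d * k <= 6 * (r * r.+1) * (2 * (k - 1)) by apply: leq_mul => //; lia.
lia.
Qed.

Lemma INR_leq m n : m <= n -> (INR m <= INR n)%R.
Proof. by move/leP; apply: le_INR. Qed.

Lemma INR_gt0 n : 0 < n -> (0 < INR n)%R.
Proof. by move/ltP; apply: lt_0_INR. Qed.

Lemma INR_muln m n : INR (m * n) = (INR m * INR n)%R.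
Proof. by rewrite -multE mult_INR. Qed.

Lemma INR_expn m n : INR (m ^ n) = (INR m ^ n)%R.
Proof. by elim: n => // n IH; rewrite expnS INR_muln IH. Qed.

Lemma ln_le x y : (0 < x)%R -> (x <= y)%R -> (ln x <= ln y)%R.
Proof.
move=> x0 /Rle_lt_or_eq_dec[xy|->]; last exact: Rle_refl.
exact/Rlt_le/ln_increasing.
Qed.

Lemma ln_leq m n : 0 < m -> m <= n -> (ln (INR m) <= ln (INR n))%R.
Proof. by move=> m0 mn; apply: ln_le; [apply: INR_gt0 | apply: INR_leq]. Qed.

Lemma ln_add_le a b : (0 < a)%R -> (0 <= b)%R -> (ln (a + b) <= ln a + b / a)%R.
Proof.
move=> a0 b0; have ba0 : (0 <= b / a)%R by apply: Rle_mult_inv_pos.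
rewrite (_ : (a + b) = a * (1 + b / a))%R; last by field; lra.
rewrite ln_mult; try lra; apply: Rplus_le_compat_l.
by rewrite -{2}(ln_exp (b / a)); apply: ln_le; [lra | apply: exp_ineq1_le].
Qed.

Lemma ln_ge1 n : 3 <= n -> (1 <= ln (INR n))%R.
Proof.
move=> /INR_leq n3; rewrite -(ln_exp 1); apply: ln_le; first exact: exp_pos.
by have := exp_le_3; rewrite /= in n3; lra.
Qed.

Lemma ln_sum_binomial_le t k : 0 < k <= t ->
  (ln (INR (\sum_(i < k.+1) 'C(t, i))) <= INR k * (1 + ln (INR t) - ln (INR k)))%R.
Proof.
case/andP=> k0 kt; have t0 : 0 < t := leq_trans k0 kt.
set S := \sum_(i < k.+1) _.
have S0 : 0 < S by rewrite /S big_ord_recl bin0.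
have Rk := INR_gt0 k0; have Rt := INR_gt0 t0; have RS := INR_gt0 S0.
have prod_le : (ln (INR S) + INR k * ln (INR k) + (INR t - INR k) * ln (INR t)
                <= INR t * ln (INR t + INR k))%R.
  have P0 : 0 < S * (k ^ k * t ^ (t - k)) by rewrite !muln_gt0 S0 !expn_gt0 k0 t0.
  have := ln_leq P0 (sum_binomial_mul_le kt).
  rewrite !INR_muln !INR_expn -plusE plus_INR !ln_mult ?ln_pow -?minusE ?minus_INR;
    try apply: Rmult_lt_0_compat; try apply: pow_lt; try lra.
  exact/leP.
have := Rmult_le_compat_l _ _ _ (Rlt_le _ _ Rt) (ln_add_le Rt (Rlt_le _ _ Rk)).
have -> : (INR t * (ln (INR t) + INR k / INR t) = INR t * ln (INR t) + INR k)%R.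
  by field; lra.
nra.
Qed.

Lemma counting_estimate d t e : 2 <= d <= 4 -> 0 < e <= 2 ^ t ->
  (INR d * ln (INR e) <= 144 * INR t * ln (INR d))%R.
Proof.
case/andP=> d2 d4 /andP[e0 e_le].
have ln2_ge0 : (0 <= ln (INR 2))%R by rewrite -ln_1; apply: (ln_leq (isT : 0 < 1)).
have ln2d : (ln (INR 2) <= ln (INR d))%R by apply: ln_leq.
have lne0 : (0 <= ln (INR e))%R by rewrite -ln_1; apply: (ln_leq (isT : 0 < 1)).
have lne : (ln (INR e) <= INR t * ln (INR d))%R.
  have := ln_leq e0 e_le; rewrite INR_expn ln_pow; last exact: INR_gt0.
  by move/Rle_trans; apply; apply: Rmult_le_compat_l; [apply: pos_INR | lra].
have := INR_leq d4; have : (0 <= INR t * ln (INR d))%R.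
  by apply: Rmult_le_pos; [apply: pos_INR | lra].
rewrite [INR 4]/=; nra.
Qed.

Lemma furedi_estimate d k t N e :
  3 <= d -> 0 < k <= t -> t <= k * d ^ 2 -> d ^ 2 * k <= 24 * t ->
  0 < N <= (\sum_(i < k.+1) 'C(t, i)) ^ 2 -> 0 < e <= N ^ d ->
  (INR d * ln (INR e) <= 144 * INR t * ln (INR d))%R.
Proof.
move=> d3 /andP[k0 kt] t_le dk_le /andP[N0 N_le] /andP[e0 e_le].
have Rk := INR_gt0 k0; have Rd := INR_gt0 (leq_trans (isT : 0 < 3) d3).
have lnd1 := ln_ge1 d3.
have lnt : (ln (INR t) <= ln (INR k) + 2 * ln (INR d))%R.
  have := ln_leq (leq_trans k0 kt) t_le.
  by rewrite INR_muln INR_expn ln_mult ?ln_pow //; apply: pow_lt.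
have lnS : (ln (INR (\sum_(i < k.+1) 'C(t, i))) <= 3 * INR k * ln (INR d))%R.
  have := ln_sum_binomial_le (introT andP (conj k0 kt)).
  have := Rmult_le_compat_l _ _ _ (Rlt_le _ _ Rk) lnt.
  have := Rmult_le_compat_l _ _ _ (Rlt_le _ _ Rk) lnd1.
  lra.
have lnN : (ln (INR N) <= 6 * INR k * ln (INR d))%R.
  have S0 : 0 < \sum_(i < k.+1) 'C(t, i) by rewrite big_ord_recl bin0.
  have := ln_leq N0 N_le; rewrite INR_expn ln_pow; last exact: INR_gt0.
  change (INR 2) with 2%R; lra.
have lne : (ln (INR e) <= INR d * ln (INR N))%R.
  by have := ln_leq e0 e_le; rewrite INR_expn ln_pow //; apply: INR_gt0.
have := INR_leq dk_le; rewrite !INR_muln (INR_IZR_INZ 24) /= => dk.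
have : (INR d * ln (INR e) <= INR d * INR d * (6 * INR k * ln (INR d)))%R.
  rewrite Rmult_assoc; apply: Rmult_le_compat_l; first lra.
  by apply: Rle_trans lne _; apply: Rmult_le_compat_l; lra.
have := Rmult_le_compat_r _ _ _ (Rle_trans _ _ _ Rle_0_1 lnd1) dk.
lra.
Qed.

Lemma Rmin_div_le a b l t : (0 < l)%R -> (a <= 144 * t \/ b <= 144 * t * l)%R ->
  (/ 144 * Rmin a (b / l) <= t)%R.
Proof.
move=> l0 [a_le|b_le]; first by have := Rmin_l a (b / l); lra.
have : (b / l <= 144 * t)%R.
  by apply: (Rmult_le_reg_r l) => //; rewrite /Rdiv Rmult_assoc Rinv_l; lra.
by have := Rmin_r a (b / l); lra.
Qed.

Section SeparatingSystem.
Variables (V W : finType) (C : V -> {set W}) (Tests : {set W}) (P : {set V}) (d : nat).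
Hypothesis C_sub_tests : forall x, C x \subset Tests.
Hypothesis outcome_inj :
  {in [set A : {set V} | A \subset P & #|A| == d] &, injective (outcome C)}.

Lemma binomial_le_exp2 : 'C(#|P|, d) <= 2 ^ #|Tests|.
Proof.
rewrite -cards_draws -card_powerset -(card_in_imset outcome_inj).
apply/subset_leq_card/subsetP => _ /imsetP[A _ ->]; rewrite inE.
by apply/bigcupsP => x _; apply: C_sub_tests.
Qed.

Section Dominated.
Hypotheses (d_gt0 : 0 < d) (d_lt : d < #|P|).

Lemma no_mutual_cover x y (S : {set V}) :
  x \in P -> y \in P -> x != y -> S \subset P :\: [set x; y] -> #|S| < d ->
  C x \subset outcome C S :|: C y -> C y \subset outcome C S :|: C x -> False.
Proof.
move=> xP yP xy SP Sd Cx Cy.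
have [Q [SQ QP Qd]] : exists Q : {set V}, [/\ S \subset Q, Q \subset P :\: [set x; y] & #|Q| = d.-1].
  apply: extend_to_card => //; rewrite cardsDS ?subUset ?sub1set ?xP ?yP // cards2 xy.
  by apply/andP; split; lia.
have xQ : x \notin Q by apply/negP => /(subsetP QP); rewrite !inE eqxx.
have yQ : y \notin Q by apply/negP => /(subsetP QP); rewrite !inE eqxx orbT.
have outSQ := outcomeS C SQ.
have swap : outcome C (x |: Q) = outcome C (y |: Q).
  rewrite !outcomeU1; apply/eqP; rewrite eqEsubset !subUset !subsetUr !andbT.
  by rewrite (subset_trans Cx) ?(subset_trans Cy) // setUC setUS.
have QP' : Q \subset P by apply: subset_trans QP (subsetDl _ _).
have draw z : z \in P -> z \notin Q -> z |: Q \in [set A : {set V} | A \subset P & #|A| == d].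
  by move=> zP zQ; rewrite inE subUset sub1set zP QP' cardsU1 zQ Qd add1n prednK ?eqxx.
have /setP/(_ x) := outcome_inj (draw x xP xQ) (draw y yP yQ) swap.
by rewrite !in_setU1 eqxx (negPf xQ) (negbTE xy).
Qed.

Variable r : nat.
Hypothesis r_lt : r.*2 < d.

Definition dominated x :=
  [exists S : {set V}, [&& S \subset P :\ x, #|S| <= r & C x \subset outcome C S]].

Lemma dominated_uniq : {in P &, forall x y, dominated x -> dominated y -> x = y}.
Proof.
move=> x y xP yP /existsP[Sx /and3P[SxP Sxr CxS]] /existsP[Sy /and3P[SyP Syr CyS]].
have [//|xy] := eqVneq x y; exfalso.
apply: (no_mutual_cover xP yP xy (S := (Sx :|: Sy) :\: [set x; y])).
- apply: setSD; rewrite subUset.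
  by rewrite (subset_trans SxP) ?(subset_trans SyP) ?subsetDl.
- by have := subset_leq_card (subsetDl (Sx :|: Sy) [set x; y]); have := cardsU Sx Sy; lia.
- apply: subset_trans CxS _; rewrite setUC -outcomeU1; apply: outcomeS.
  apply/subsetP => z zS; have := subsetP SxP z zS; rewrite !inE zS => /andP[/negPf-> _].
  by case: (z == y).
- apply: subset_trans CyS _; rewrite setUC -outcomeU1; apply: outcomeS.
  apply/subsetP => z zS; have := subsetP SyP z zS; rewrite !inE zS orbT => /andP[/negPf-> _].
  by case: (z == x).
Qed.

Definition undominated := [set x in P | ~~ dominated x].

Lemma card_undominated : #|P| <= #|undominated| + 1.
Proof. exact: card_le_except_one dominated_uniq. Qed.

Lemma undominated_cover_free x (S : {set V}) :
  x \in undominated -> S \subset undominated -> x \notin S -> #|S| <= r ->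
  ~~ (C x \subset outcome C S).
Proof.
rewrite inE => /andP[xP not_dom] SU xS Sr; apply: contra not_dom => CxS.
apply/existsP; exists S.
rewrite Sr CxS !andbT; apply/subsetP => z zS; rewrite !inE.
have := subsetP SU z zS; rewrite inE => /andP[-> _]; rewrite andbT.
by apply: contraNneq xS => <-.
Qed.
End Dominated.

Lemma separating_system_bound_large : 4 < d < #|P| ->
  (INR #|P| <= 144 * INR #|Tests|)%R \/
  (INR d * ln (INR 'C(#|P|, d)) <= 144 * INR #|Tests| * ln (INR d))%R.
Proof.
case/andP=> d4 dP; set t := #|Tests|.
pose r := d.-1./2; pose G := undominated r.
have r_lt : r.*2 < d by rewrite /r; lia.
have r2 : 1 < r by rewrite /r; lia.
have d0 : 0 < d by lia.
have P_le : #|P| <= #|G| + 1 := @card_undominated d0 dP r r_lt.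
have cover_free := @undominated_cover_free r.
have rt : r < t.
  apply: (cover_free_card_tests C_sub_tests cover_free); rewrite -/G; lia.
pose Q := r * r.+1; pose k := (2 * t) %/ Q + 1.
have Q_gt0 : 0 < Q by rewrite muln_gt0; lia.
have kQ : 2 * t < k * Q by rewrite /k addn1 ltn_ceil.
have G_le : #|G| <= r + \sum_(i < k.+1) 'C(t, i).
  apply: leq_trans (card_cover_free_le C_sub_tests cover_free (k := k) _) _.
    by rewrite -mulnA -/Q; lia.
  by rewrite leq_add2l card_subsets_upto.
have [small|big] := ltnP (2 * t) Q.
  left; have k1 : k = 1 by rewrite /k divn_small.
  have /INR_leq : #|P| <= 144 * t by move: G_le; rewrite k1 sum_binomial1 -/G; lia.
  by rewrite INR_muln (INR_IZR_INZ 144).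
right; have k2 : 1 < k by rewrite /k addn1 ltnS divn_gt0.
have kQ' : (k - 1) * Q <= 2 * t by rewrite /k addnK leq_divM.
have [k_t t_kd dk_t] : [/\ 0 < k <= t, t <= k * d ^ 2 & d ^ 2 * k <= 24 * t].
  by apply: (furedi_parameters (r := r)); rewrite ?kQ ?kQ' // /r; lia.
apply: (furedi_estimate (k := k) (N := #|P|)) => //;
  [lia | | by rewrite bin_gt0 bin_le_expn ltnW].
have S_ge := sum_binomial_ge t (ltnW k2).
set S := \sum_(i < k.+1) _ in G_le S_ge *; rewrite -mulnn.
have : 2 * S <= S * S by rewrite leq_mul2r; lia.
by move: G_le; rewrite -/G; lia.
Qed.

Theorem separating_system_bound : 2 <= d <= #|P| ->
  (INR #|P| <= 144 * INR #|Tests|)%R \/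
  (INR d * ln (INR 'C(#|P|, d)) <= 144 * INR #|Tests| * ln (INR d))%R.
Proof.
case/andP=> d2 dP; have [d4|d4] := leqP d 4.
  right; apply: counting_estimate; first by rewrite d2 d4.
  by rewrite bin_gt0 dP binomial_le_exp2.
have [Pd|dP'] := eqVneq #|P| d.
  right; rewrite Pd binn ln_1 Rmult_0_r.
  apply: Rmult_le_pos; first by apply: Rmult_le_pos; [lra | apply: pos_INR].
  by rewrite -ln_1; apply: (ln_leq (isT : 0 < 1)); lia.
by apply: separating_system_bound_large; rewrite d4 ltn_neqAle eq_sym dP' dP.
Qed.
End SeparatingSystem.

Lemma ngt_solution_outcome_inj (V : finType) (E Tests : {set {set V}}) :
  ngt_solution E Tests -> {in E &, injective (outcome (fun x => [set T in Tests | x \in T]))}.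
Proof.
have hit A T : T \in Tests ->
    (T \in outcome (fun x => [set T in Tests | x \in T]) A) = (A :&: T != set0).
  move=> TT; apply/bigcupP/set0Pn => [[x xA]|[x]]; rewrite !inE.
    by case/andP=> _ xT; exists x; rewrite inE xA.
  by case/andP=> xA xT; exists x; rewrite // inE TT.
move=> sol A B AE BE eqAB; apply: contraTeq isT => AB.
have [T TT] := sol A B AE BE AB.
rewrite /separates -(negbK (A :&: T == set0)) -(negbK (B :&: T == set0)).
by rewrite -!hit // eqAB eqxx.
Qed.

Lemma card_ord_lt n m : m <= n -> #|[set x : 'I_n | x < m]| = m.
Proof.
move=> mn; have -> : [set x : 'I_n | x < m] = widen_ord mn @: [set: 'I_m].
  apply/setP => x; rewrite inE; apply/idP/imsetP => [xm | [y _ ->]]; last exact: ltn_ord y.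
  by exists (Ordinal xm); last apply: val_inj.
by rewrite card_imset ?cardsT ?card_ord // => x y /(congr1 val) /= /val_inj.
Qed.

Theorem claim5 :
  exists c : R, (0 < c)%R /\
  forall n n' d : nat, (2 <= d)%N -> (d <= n')%N -> (n' <= n)%N ->
  exists E : {set {set 'I_n}},
    (forall A, A \in E -> #|A| = d) /\ #|E| = 'C(n', d) /\
    forall Tests : {set {set 'I_n}}, ngt_solution E Tests ->
      (c * Rmin (INR n') (INR d * ln (INR #|E|) / ln (INR d)) <= INR #|Tests|)%R.
Proof.
exists (/ 144)%R; split; first lra.
move=> n n' d d2 dn' n'n; set P := [set x : 'I_n | x < n'].
have cardP : #|P| = n' by apply: card_ord_lt.
set E := [set A : {set 'I_n} | A \subset P & #|A| == d].
have cardE : #|E| = 'C(n', d) by rewrite cards_draws cardP.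
exists E; split; first by move=> A; rewrite inE => /andP[_ /eqP].
split=> // Tests /ngt_solution_outcome_inj outcome_inj.
have lnd : (0 < ln (INR d))%R.
  by rewrite -ln_1; apply: ln_increasing; [lra | apply/lt_1_INR/ltP].
apply: Rmin_div_le lnd _; rewrite -cardP cardE -cardP.
apply: (separating_system_bound (Tests := Tests)) outcome_inj _; last by rewrite d2 cardP.
by move=> x; apply/subsetP => T; rewrite inE => /andP[].
Qed.
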